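(* Assume Assumption 1, and assume that for every finite collection of samples one of the following holds: (1) the game $\mathcal G$ admits a unique Nash equilibrium; or (2) $g(x,\theta)=\tilde g(\sigma(x),\theta)$ depends on $x$ only through the aggregate $\sigma(x)=\sum_{i\in\mathcal N}x_i$, and all Nash equilibria of $\mathcal G$ have the same aggregate $\sigma(x)$. Given samples $\theta_1,\dots,\theta_M$, let $(x^*,y^* )$ be the minimum-Euclidean-norm solution of $\mathrm{VI}(F,\mathcal X\times\Delta_M)$ (so $x^*=\Phi(\theta_1,\dots,\theta_M)$), and let $\mathcal Y^*=\{m\in\{1,\dots,M\}: y^*_m>0\}$. Then $\{\theta_m\}_{m\in\mathcal Y^*}$ is a compression set, i.e. $\Phi(\{\theta_m\}_{m\in\mathcal Y^*})=\Phi(\theta_1,\dots,\theta_M)=x^*$.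
   Context: Let $\mathcal N=\{1,\dots,N\}$ be a set of agents. Agent $i$ chooses $x_i\in\mathcal X_i\subset\mathbb R^n$; write $x=(x_i)_{i\in\mathcal N}\in\mathcal X=\mathcal X_1\times\cdots\times\mathcal X_N\subset\mathbb R^{nN}$ and $x_{-i}=(x_j)_{j\neq i}$. Let $\Theta$ be a set, $f_i:\mathbb R^{nN}\to\mathbb R$, $g:\mathbb R^{nN}\times\Theta\to\mathbb R$. For samples $S=\{\vartheta_1,\dots,\vartheta_K\}$, the game $\mathcal G(S)$ has each agent $i$ minimize over $x_i\in\mathcal X_i$ the cost $f_i(x)+\max_{\vartheta\in S}g(x,\vartheta)$; a Nash equilibrium is $x^*\in\mathcal X$ with $x^*_i$ optimal for each $i$ given $x^*_{-i}$. Assumption 1 (in case (2) with $g(\cdot,x_{-i},\theta)$ read as $\tilde g(\sigma(\cdot,x_{-i}),\theta)$): (i) for every $\theta\in\Theta$ and every $x_{-i}\in\prod_{j\ne i}\mathcal X_j$, $f_i(\cdot,x_{-i})+g(\cdot,x_{-i},\theta)$ is convex and continuously differentiable, and each $\mathcal X_i$ is nonempty, compact and convex; (ii) for every $\theta$ and $i$, $g(\cdot,\theta)$ and $f_i$ are twice differentiable on an open convex set containing $\mathcal X$; (iii) there are $\chi^f,\chi^g\in\mathbb R$ with $\chi^f+\chi^g\ge0$ such that for all $u,v\in\mathbb R^{nN}$ and $\theta\in\Theta$: $(u-v)^\top\big((\nabla_{u_i}f_i(u))_{i}-(\nabla_{v_i}f_i(v))_{i}\big)\ge\chi^f\|u-v\|^2$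 and $(u-v)^\top(\nabla_u g(u,\theta)-\nabla_v g(v,\theta))\ge\chi^g\|u-v\|^2$. For samples $\vartheta_1,\dots,\vartheta_K$: $\Delta_K=\{y\in\mathbb R^K:y\ge0,\sum_m y_m=1\}$, $\hat g(x,y)=\sum_m y_m g(x,\vartheta_m)$, $F(x,y)=\big((\nabla_{x_i}f_i(x)+\nabla_{x_i}\hat g(x,y))_i,\ -(g(x,\vartheta_m))_{m=1}^K\big)$; $\mathrm{VI}(F,\mathcal X\times\Delta_K)$: find $z^*\in\mathcal X\times\Delta_K$ with $(z-z^* )^\top F(z^* )\ge0$ for all $z\in\mathcal X\times\Delta_K$. $\Phi(\vartheta_1,\dots,\vartheta_K)$ is the $x$-component of the minimum-Euclidean-norm solution of this VI. A subcollection $\mathcal C$ of $\{\theta_1,\dots,\theta_M\}$ is a compression set if $\Phi(\mathcal C)=\Phi(\theta_1,\dots,\theta_M)$. *)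

From mathcomp Require Import all_boot.
From Stdlib Require Import Reals.
Set Implicit Arguments. Unset Strict Implicit. Unset Printing Implicit Defensive.
Open Scope R_scope.

Definition rsum (I : finType) (F : I -> R) : R := \big[Rplus/0]_(i : I) F i.

Definition adot (n : nat) (a b : 'I_n -> R) : R := rsum (fun k => a k * b k).
Definition anorm (n : nat) (a : 'I_n -> R) : R := sqrt (adot a a).
Definition asub (n : nat) (a b : 'I_n -> R) : 'I_n -> R := fun k => a k - b k.
Definition acomb (n : nat) (t : R) (a b : 'I_n -> R) : 'I_n -> R :=
  fun k => t * a k + (1 - t) * b k.

Definition prof (N n : nat) := 'I_N -> 'I_n -> R.
Definition pdot (N n : nat) (x y : prof N n) : R := rsum (fun i => adot (x i) (y i)).
Definition pnorm (N n : nat) (x : prof N n) : R := sqrt (pdot x x).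
Definition padd (N n : nat) (x y : prof N n) : prof N n := fun i k => x i k + y i k.
Definition psub (N n : nat) (x y : prof N n) : prof N n := fun i k => x i k - y i k.
Definition pscale (N n : nat) (t : R) (x : prof N n) : prof N n := fun i k => t * x i k.
Definition pcomb (N n : nat) (t : R) (x y : prof N n) : prof N n :=
  fun i k => t * x i k + (1 - t) * y i k.

Definition upd (N n : nat) (x : prof N n) (i : 'I_N) (z : 'I_n -> R) : prof N n :=
  fun j => if j == i then z else x j.

Definition aggr (N n : nat) (x : prof N n) : 'I_n -> R := fun k => rsum (fun i => x i k).

Definition is_grad_at (N n : nat) (F : prof N n -> R) (v x : prof N n) : Prop :=
  forall eps, 0 < eps -> exists delta, 0 < delta /\
    forall h, pnorm h < delta ->
      Rabs (F (padd x h) - F x - pdot v h) <= eps * pnorm h.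

Definition is_agrad_at (n : nat) (F : ('I_n -> R) -> R) (v z : 'I_n -> R) : Prop :=
  forall eps, 0 < eps -> exists delta, 0 < delta /\
    forall h, anorm h < delta ->
      Rabs (F (fun k => z k + h k) - F z - adot v h) <= eps * anorm h.

Definition plinear (N n : nat) (L : prof N n -> prof N n) : Prop :=
  (forall u v, L (padd u v) = padd (L u) (L v)) /\
  (forall t u, L (pscale t u) = pscale t (L u)).

Definition differentiable_map_at (N n : nat) (G : prof N n -> prof N n) (x : prof N n) : Prop :=
  exists L, plinear L /\
    forall eps, 0 < eps -> exists delta, 0 < delta /\
      forall h, pnorm h < delta ->
        pnorm (psub (psub (G (padd x h)) (G x)) (L h)) <= eps * pnorm h.

Definition acontinuous (n : nat) (H : ('I_n -> R) -> ('I_n -> R)) : Prop :=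
  forall z eps, 0 < eps -> exists delta, 0 < delta /\
    forall w, anorm (asub w z) < delta -> anorm (asub (H w) (H z)) < eps.

Definition anonempty (n : nat) (A : ('I_n -> R) -> Prop) : Prop := exists a, A a.
Definition aconvex (n : nat) (A : ('I_n -> R) -> Prop) : Prop :=
  forall a b t, A a -> A b -> 0 <= t <= 1 -> A (acomb t a b).
(* compact subset of R^n = closed and bounded (Heine-Borel) *)
Definition aclosed (n : nat) (A : ('I_n -> R) -> Prop) : Prop :=
  forall z, (forall eps, 0 < eps -> exists a, A a /\ anorm (asub a z) < eps) -> A z.
Definition abounded (n : nat) (A : ('I_n -> R) -> Prop) : Prop :=
  exists B, forall a, A a -> anorm a <= B.
Definition acompact (n : nat) (A : ('I_n -> R) -> Prop) : Prop :=
  aclosed A /\ abounded A.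
Definition aconvex_fun_on (n : nat) (A : ('I_n -> R) -> Prop) (h : ('I_n -> R) -> R) : Prop :=
  forall a b t, A a -> A b -> 0 <= t <= 1 ->
    h (acomb t a b) <= t * h a + (1 - t) * h b.

Definition popen (N n : nat) (U : prof N n -> Prop) : Prop :=
  forall x, U x -> exists r, 0 < r /\ forall z, pnorm (psub z x) < r -> U z.
Definition pconvex (N n : nat) (U : prof N n -> Prop) : Prop :=
  forall x y t, U x -> U y -> 0 <= t <= 1 -> U (pcomb t x y).

Definition inX (N n : nat) (Xs : 'I_N -> ('I_n -> R) -> Prop) (x : prof N n) : Prop :=
  forall i, Xs i (x i).

(* ---------- Assumption 1 ----------
   pgf i x  plays the role of  nabla_{x_i} f_i(x)  (partial gradient),
   gg x th  plays the role of  nabla_x g(x, th). *)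
Definition assumption1 (N n : nat) (Theta : Type) (Xs : 'I_N -> ('I_n -> R) -> Prop)
    (f : 'I_N -> prof N n -> R) (g : prof N n -> Theta -> R)
    (pgf : 'I_N -> prof N n -> ('I_n -> R)) (gg : prof N n -> Theta -> prof N n) : Prop :=
  (* the gradients appearing in (iii) and in F exist everywhere *)
  (forall i x, is_agrad_at (fun z => f i (upd x i z)) (pgf i x) (x i)) /\
  (forall th x, is_grad_at (fun u => g u th) (gg x th) x) /\
  (forall i, anonempty (Xs i) /\ acompact (Xs i) /\ aconvex (Xs i)) /\
  (forall th i x, (forall j, j <> i -> Xs j (x j)) ->
     aconvex_fun_on (Xs i) (fun z => f i (upd x i z) + g (upd x i z) th) /\
     acontinuous (fun z => fun k => pgf i (upd x i z) k + gg (upd x i z) th i k)) /\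
  (forall th, exists U : prof N n -> Prop, popen U /\ pconvex U /\
     (forall x, inX Xs x -> U x) /\
     (forall x, U x -> differentiable_map_at (fun u => gg u th) x)) /\
  (forall i, exists U : prof N n -> Prop, popen U /\ pconvex U /\
     (forall x, inX Xs x -> U x) /\
     exists G : prof N n -> prof N n,
       forall x, U x -> is_grad_at (f i) (G x) x /\ differentiable_map_at G x) /\
  exists chif chig : R, 0 <= chif + chig /\
    (forall u v : prof N n,
       chif * (pnorm (psub u v))^2 <= pdot (psub u v) (fun i k => pgf i u k - pgf i v k)) /\
    (forall (u v : prof N n) th,
       chig * (pnorm (psub u v))^2 <= pdot (psub u v) (psub (gg u th) (gg v th))).

Definition list_max (l : seq R) : R :=
  match l with [::] => 0 | a :: l' => foldr Rmax a l' end.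

Definition cost (N n : nat) (Theta : Type) (f : 'I_N -> prof N n -> R)
    (g : prof N n -> Theta -> R) (S : seq Theta) (i : 'I_N) (x : prof N n) : R :=
  f i x + list_max [seq g x th | th <- S].

Definition is_NE (N n : nat) (Theta : Type) (Xs : 'I_N -> ('I_n -> R) -> Prop)
    (f : 'I_N -> prof N n -> R) (g : prof N n -> Theta -> R) (S : seq Theta)
    (x : prof N n) : Prop :=
  inX Xs x /\
  forall i z, Xs i z -> cost f g S i x <= cost f g S i (upd x i z).

Definition sample (Theta : Type) (l : seq Theta) (m : 'I_(size l)) : Theta :=
  tnth (in_tuple l) m.

Definition in_simplex (K : nat) (y : 'I_K -> R) : Prop :=
  (forall m, 0 <= y m) /\ rsum y = 1.

Definition Fx (N n : nat) (Theta : Type) (pgf : 'I_N -> prof N n -> ('I_n -> R))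
    (gg : prof N n -> Theta -> prof N n) (l : seq Theta)
    (x : prof N n) (y : 'I_(size l) -> R) : prof N n :=
  fun i k => pgf i x k + rsum (fun m => y m * gg x (sample m) i k).

Definition Fy (N n : nat) (Theta : Type) (g : prof N n -> Theta -> R) (l : seq Theta)
    (x : prof N n) : 'I_(size l) -> R :=
  fun m => - g x (sample m).

Definition VI_sol (N n : nat) (Theta : Type) (Xs : 'I_N -> ('I_n -> R) -> Prop)
    (pgf : 'I_N -> prof N n -> ('I_n -> R)) (g : prof N n -> Theta -> R)
    (gg : prof N n -> Theta -> prof N n) (l : seq Theta)
    (x : prof N n) (y : 'I_(size l) -> R) : Prop :=
  inX Xs x /\ in_simplex y /\
  forall (x' : prof N n) (y' : 'I_(size l) -> R), inX Xs x' -> in_simplex y' ->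
    0 <= pdot (psub x' x) (Fx pgf gg x y) + rsum (fun m => (y' m - y m) * Fy g x m).

Arguments VI_sol {N n Theta} Xs pgf g gg l x y.

Definition znorm (N n K : nat) (x : prof N n) (y : 'I_K -> R) : R :=
  sqrt (pdot x x + rsum (fun m => y m * y m)).

Definition min_norm_sol (N n : nat) (Theta : Type) (Xs : 'I_N -> ('I_n -> R) -> Prop)
    (pgf : 'I_N -> prof N n -> ('I_n -> R)) (g : prof N n -> Theta -> R)
    (gg : prof N n -> Theta -> prof N n) (l : seq Theta)
    (x : prof N n) (y : 'I_(size l) -> R) : Prop :=
  VI_sol Xs pgf g gg l x y /\
  forall x' y', VI_sol Xs pgf g gg l x' y' -> znorm x y <= znorm x' y'.
Arguments min_norm_sol {N n Theta} Xs pgf g gg l x y.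

Definition Phi_is (N n : nat) (Theta : Type) (Xs : 'I_N -> ('I_n -> R) -> Prop)
    (pgf : 'I_N -> prof N n -> ('I_n -> R)) (g : prof N n -> Theta -> R)
    (gg : prof N n -> Theta -> prof N n) (l : seq Theta) (x : prof N n) : Prop :=
  (exists y, min_norm_sol Xs pgf g gg l x y) /\
  (forall x' y, min_norm_sol Xs pgf g gg l x' y -> x' = x).

Definition Rpos_b (r : R) : bool := if Rlt_dec 0 r then true else false.

Definition supp_samples (Theta : Type) (l : seq Theta) (y : 'I_(size l) -> R) : seq Theta :=
  [seq sample m | m <- enum 'I_(size l) & Rpos_b (y m)].
Arguments supp_samples {Theta} l y.
Arguments Phi_is {N n Theta} Xs pgf g gg l x.

(* Let (xs, ys) be the minimum-norm solution of VI(F, X x Delta_M) and let S be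
   the list of samples theta_m with ys_m > 0.  The proof has three ingredients.
   1. Every solution (x, y) of the VI gives a Nash equilibrium x of G: the
      x-part of the VI is the first-order optimality condition of the convex
      averaged cost f_i + sum_m y_m g(., theta_m), and the y-part says that y
      puts its mass on maximisers of g(x, .), so the average equals the max.
   2. Over a fixed list of samples, the minimum-norm VI solutions all have the
      same x.  Under a unique equilibrium this is (1).  In the aggregative case
      two minimum-norm solutions with the same aggregate average to another VI
      solution (monotonicity of the pseudo-gradient plus the Minty argument),
      and strict convexity of the squared norm forces them to coincide.
   3. Extending weights on S by zero to weights on all samples, and restricting
      ys to S, transport VI solutions and their norms between the two lists;
      the equilibrium hypothesis on S makes g agree at the two x's, which is
      what lets an S-solution be extended. *)
From HB Require Import structures.
From mathcomp Require Import all_boot.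
From Stdlib Require Import Reals Lra FunctionalExtensionality Classical.
Open Scope R_scope.
Set Implicit Arguments. Unset Strict Implicit.

HB.instance Definition _ := Monoid.isComLaw.Build R 0 Rplus
  (fun a b c => esym (Rplus_assoc a b c)) Rplus_comm Rplus_0_l.
HB.instance Definition _ := Monoid.isMulLaw.Build R 0 Rmult Rmult_0_l Rmult_0_r.
HB.instance Definition _ :=
  Monoid.isAddLaw.Build R Rmult Rplus Rmult_plus_distr_r Rmult_plus_distr_l.

Lemma rsum_ext (I : finType) (F G : I -> R) : (forall i, F i = G i) -> rsum F = rsum G.
Proof. by move=> H; rewrite /rsum; apply: eq_bigr => i _; rewrite H. Qed.

Lemma rsum_add (I : finType) (F G : I -> R) : rsum (fun i => F i + G i) = rsum F + rsum G.
Proof. by rewrite /rsum big_split. Qed.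

Lemma rsum_mull (I : finType) c (F : I -> R) : rsum (fun i => c * F i) = c * rsum F.
Proof. by rewrite /rsum -big_distrr. Qed.

Lemma rsum_mulr (I : finType) c (F : I -> R) : rsum (fun i => F i * c) = rsum F * c.
Proof. by rewrite /rsum -big_distrl. Qed.

Lemma rsum_0 (I : finType) : rsum (fun _ : I => 0) = 0.
Proof. by rewrite /rsum big1. Qed.

Lemma rsum_opp (I : finType) (F : I -> R) : rsum (fun i => - F i) = - rsum F.
Proof.
have -> : - rsum F = (-1) * rsum F by ring.
by rewrite -rsum_mull; apply: rsum_ext => i; ring.
Qed.

Lemma rsum_sub (I : finType) (F G : I -> R) : rsum (fun i => F i - G i) = rsum F - rsum G.
Proof. by rewrite /Rminus -rsum_opp -rsum_add. Qed.

Lemma rsum_lin3 (I : finType) (A B C D : I -> R) a b c :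
  (forall i, A i = a * B i + b * C i + c * D i) ->
  rsum A = a * rsum B + b * rsum C + c * rsum D.
Proof. by move=> H; rewrite (rsum_ext H) !rsum_add !rsum_mull. Qed.

Lemma rsum_ge0 (I : finType) (F : I -> R) : (forall i, 0 <= F i) -> 0 <= rsum F.
Proof.
by move=> H; rewrite /rsum; apply: (big_ind (fun x => 0 <= x)) => //; [lra | move=> *; lra].
Qed.

Lemma rsum_le (I : finType) (F G : I -> R) : (forall i, F i <= G i) -> rsum F <= rsum G.
Proof.
by move=> H; rewrite /rsum; apply: (big_ind2 (fun x y => x <= y)) => //; [lra | move=> *; lra].
Qed.

Lemma rsum_swap (I J : finType) (F : I -> J -> R) :
  rsum (fun i => rsum (fun j => F i j)) = rsum (fun j => rsum (fun i => F i j)).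
Proof. by rewrite /rsum exchange_big. Qed.

Lemma rsum_pick (I : finType) (i0 : I) (F : I -> R) :
  rsum (fun j => if j == i0 then F j else 0) = F i0.
Proof. by rewrite /rsum (bigD1 i0) //= eqxx big1 ?Rplus_0_r // => j /negbTE ->. Qed.

Lemma rsum_single (I : finType) (i : I) (F : I -> R) : (forall j, j = i) -> rsum F = F i.
Proof. move=> H; rewrite -(rsum_pick i F); apply: rsum_ext => j; by rewrite (H j) eqxx. Qed.

Lemma rsum_elem (I : finType) (F : I -> R) i0 : (forall i, 0 <= F i) -> F i0 <= rsum F.
Proof.
move=> H; rewrite /rsum (bigD1 i0) //=.
have : 0 <= \big[Rplus/0]_(i | i != i0) F i.
  by apply: (big_ind (fun x => 0 <= x)) => //; [lra | move=> *; lra].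
lra.
Qed.

Lemma abs_rsum_le (I : finType) (F : I -> R) : Rabs (rsum F) <= rsum (fun i => Rabs (F i)).
Proof.
apply: Rabs_le; split; last by apply: rsum_le => i; exact: Rle_abs.
rewrite -rsum_opp; apply: rsum_le => i; move: (Rle_abs (- F i)); rewrite Rabs_Ropp; lra.
Qed.

Lemma fin_unif (I : finType) (P : I -> R -> Prop) :
  (forall i, exists T, 0 < T /\ forall t, 0 < t < T -> P i t) ->
  exists T, 0 < T /\ forall t, 0 < t < T -> forall i, P i t.
Proof.
move=> H.
suff /(_ (enum I)) [T [hT HT]] : forall s : seq I, exists T, 0 < T /\
    forall t, 0 < t < T -> forall i, i \in s -> P i t.
  by exists T; split => // t ht i; apply: HT => //; rewrite mem_enum.
elim=> [|a s [T [hT HT]]]; first by exists 1; split; [lra | by []].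
case: (H a) => Ta [hTa HTa]; exists (Rmin T Ta); split; first exact: Rmin_pos.
move=> t ht i; rewrite in_cons => /orP [/eqP -> | hi].
  by apply: HTa; have := Rmin_r T Ta; lra.
by apply: HT => //; have := Rmin_l T Ta; lra.
Qed.

Lemma prof_ext N n (x y : prof N n) : (forall i k, x i k = y i k) -> x = y.
Proof.
by move=> H; apply: functional_extensionality => i; apply: functional_extensionality => k.
Qed.

Lemma adot_ge0 n (a : 'I_n -> R) : 0 <= adot a a.
Proof. by apply: rsum_ge0 => k; nra. Qed.

Lemma pdot_ge0 N n (x : prof N n) : 0 <= pdot x x.
Proof. by apply: rsum_ge0 => i; exact: adot_ge0. Qed.

Lemma anorm_ge0 n (a : 'I_n -> R) : 0 <= anorm a.
Proof. exact: sqrt_pos. Qed.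

Lemma pnorm_ge0 N n (x : prof N n) : 0 <= pnorm x.
Proof. exact: sqrt_pos. Qed.

Lemma adot_comm n (a b : 'I_n -> R) : adot a b = adot b a.
Proof. by apply: rsum_ext => k; ring. Qed.

Lemma pdot_comm N n (x y : prof N n) : pdot x y = pdot y x.
Proof. by apply: rsum_ext => i; exact: adot_comm. Qed.

Lemma adot_scale n (a b : 'I_n -> R) t : adot a (fun k => t * b k) = t * adot a b.
Proof. by rewrite /adot -rsum_mull; apply: rsum_ext => k; ring. Qed.

Lemma pdot_scale N n (x y : prof N n) t : pdot x (pscale t y) = t * pdot x y.
Proof. by rewrite /pdot -rsum_mull; apply: rsum_ext => i; exact: adot_scale. Qed.

Lemma adot_subl n (a b c : 'I_n -> R) : adot (fun k => a k - b k) c = adot a c - adot b c.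
Proof. by rewrite /adot -rsum_sub; apply: rsum_ext => k; ring. Qed.

Lemma pdot_subl N n (x y z : prof N n) : pdot (psub x y) z = pdot x z - pdot y z.
Proof. by rewrite /pdot -rsum_sub; apply: rsum_ext => i; exact: adot_subl. Qed.

Lemma pdot_subr N n (x y z : prof N n) : pdot z (psub x y) = pdot z x - pdot z y.
Proof. by rewrite pdot_comm pdot_subl pdot_comm (pdot_comm z y). Qed.

Lemma pdot_addr N n (x y z : prof N n) : pdot z (padd x y) = pdot z x + pdot z y.
Proof.
rewrite /pdot -rsum_add; apply: rsum_ext => i.
by rewrite /adot -rsum_add; apply: rsum_ext => k; rewrite /padd; ring.
Qed.

Lemma pdot_lin3 N n (A B C D A' B' C' D' : prof N n) a b c :
  (forall i k, A i k * A' i k = a * (B i k * B' i k) + b * (C i k * C' i k) + c * (D i k * D' i k)) ->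
  pdot A A' = a * pdot B B' + b * pdot C C' + c * pdot D D'.
Proof. by move=> H; apply: rsum_lin3 => i; apply: rsum_lin3 => k; exact: H. Qed.

Lemma sqrt_scale t p : 0 <= t -> 0 <= p -> sqrt (t * (t * p)) = t * sqrt p.
Proof. by move=> ht hp; rewrite -Rmult_assoc sqrt_mult ?sqrt_square //; nra. Qed.

Lemma anorm_scale n (b : 'I_n -> R) t : 0 <= t -> anorm (fun k => t * b k) = t * anorm b.
Proof.
move=> ht; rewrite /anorm -sqrt_scale //; last exact: adot_ge0.
by congr sqrt; rewrite /adot -!rsum_mull; apply: rsum_ext => k /=; ring.
Qed.

Lemma pnorm_scale N n (x : prof N n) t : 0 <= t -> pnorm (pscale t x) = t * pnorm x.
Proof.
move=> ht; rewrite /pnorm -sqrt_scale //; last exact: pdot_ge0.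
congr sqrt; rewrite /pdot -!rsum_mull; apply: rsum_ext => i.
by rewrite /adot -!rsum_mull; apply: rsum_ext => k /=; rewrite /pscale; ring.
Qed.

Lemma comp_le_anorm n (a : 'I_n -> R) k : Rabs (a k) <= anorm a.
Proof.
rewrite -sqrt_Rsqr_abs /anorm; apply: sqrt_le_1_alt.
by rewrite /Rsqr; apply: (rsum_elem (F := fun k => a k * a k)) => j; nra.
Qed.

Lemma comp_le_pnorm N n (x : prof N n) i k : Rabs (x i k) <= pnorm x.
Proof.
rewrite -sqrt_Rsqr_abs /pnorm; apply: sqrt_le_1_alt.
apply: Rle_trans (_ : adot (x i) (x i) <= _).
  by rewrite /Rsqr; apply: (rsum_elem (F := fun k => x i k * x i k)) => j; nra.
by apply: (rsum_elem (F := fun i => adot (x i) (x i))) => j; exact: adot_ge0.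
Qed.

Lemma adot_self0 n (a : 'I_n -> R) : adot a a = 0 -> forall k, a k = 0.
Proof.
move=> H k; have := comp_le_anorm a k; rewrite /anorm H sqrt_0.
by case: (Req_dec (a k) 0) => // h; have := Rabs_pos_lt _ h; lra.
Qed.

Lemma pdot_self0 N n (x : prof N n) : pdot x x = 0 -> x = (fun _ _ => 0).
Proof.
move=> H; apply: prof_ext => i k; have := comp_le_pnorm x i k; rewrite /pnorm H sqrt_0.
by case: (Req_dec (x i k) 0) => // h; have := Rabs_pos_lt _ h; lra.
Qed.

Lemma abs_adot_le n (a b : 'I_n -> R) c : (forall k, Rabs (b k) <= c) ->
  Rabs (adot a b) <= rsum (fun k => Rabs (a k)) * c.
Proof.
move=> H; rewrite -rsum_mulr; apply: Rle_trans (abs_rsum_le _) _.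
apply: rsum_le => k; rewrite Rabs_mult.
by apply: Rmult_le_compat_l; [exact: Rabs_pos | exact: H].
Qed.

Lemma small0 a c : 0 <= c -> (forall eps, 0 < eps -> Rabs a <= eps * c) -> a = 0.
Proof.
move=> hc H; case: (Req_dec a 0) => // ha.
have hpa : 0 < Rabs a by apply: Rabs_pos_lt.
have hd : 0 < 2 * (c + 1) by lra.
have := H _ (Rdiv_lt_0_compat _ _ hpa hd).
have : Rabs a / (2 * (c + 1)) * c < Rabs a.
  by apply: (Rmult_lt_reg_r (2 * (c + 1))) => //; field_simplify; try lra; nra.
lra.
Qed.

Lemma small_le a b c : 0 <= c -> (forall eps, 0 < eps -> a <= b + eps * c) -> a <= b.
Proof.
move=> hc H; case: (Rle_dec a b) => // /Rnot_le_lt hab.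
have hd : 0 < (a - b) / (2 * (c + 1)) by apply: Rdiv_lt_0_compat; lra.
have := H _ hd.
have : (a - b) / (2 * (c + 1)) * c < a - b.
  by apply: (Rmult_lt_reg_r (2 * (c + 1))); [lra | field_simplify; try lra; nra].
lra.
Qed.

Lemma pick_t T1 T2 : 0 < T1 -> 0 < T2 -> exists t, (0 < t < T1) /\ (0 < t < T2) /\ t <= 1.
Proof.
move=> h1 h2; exists (Rmin (Rmin T1 T2) 1 / 2).
have := Rmin_l (Rmin T1 T2) 1; have := Rmin_r (Rmin T1 T2) 1.
have := Rmin_l T1 T2; have := Rmin_r T1 T2.
have : 0 < Rmin (Rmin T1 T2) 1 by apply: Rmin_pos; [apply: Rmin_pos |]; lra.
lra.
Qed.

Lemma abs_div_t t y eps p : 0 < t -> Rabs (t * y) <= eps * (t * p) -> Rabs y <= eps * p.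
Proof.
move=> ht; rewrite Rabs_mult (Rabs_pos_eq t); last lra.
by move=> h; apply: (Rmult_le_reg_l t) => //; nra.
Qed.

Lemma shrink_step (p delta t : R) : 0 <= p -> 0 < delta ->
  0 < t < delta / (p + 1) -> t * p < delta.
Proof.
move=> hp hd [ht1 ht2]; suff : t * (p + 1) < delta by nra.
have hp1 : 0 < p + 1 by lra.
have := Rmult_lt_compat_r _ _ _ hp1 ht2.
by rewrite /Rdiv Rmult_assoc Rinv_l; lra.
Qed.

Lemma grad_dir N n (F : prof N n -> R) v x (d : prof N n) :
  is_grad_at F v x -> forall eps, 0 < eps -> exists T, 0 < T /\ forall t, 0 < t < T ->
    Rabs (F (padd x (pscale t d)) - F x - t * pdot v d) <= eps * (t * pnorm d).
Proof.
move=> Hg eps he; case: (Hg eps he) => delta [hd Hh].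
have hp := pnorm_ge0 d.
exists (delta / (pnorm d + 1)); split; first by apply: Rdiv_lt_0_compat; lra.
move=> t ht; rewrite -pdot_scale -pnorm_scale; last lra.
by apply: Hh; rewrite pnorm_scale; [exact: shrink_step | lra].
Qed.

Lemma agrad_dir n (F : ('I_n -> R) -> R) v z (d : 'I_n -> R) :
  is_agrad_at F v z -> forall eps, 0 < eps -> exists T, 0 < T /\ forall t, 0 < t < T ->
    Rabs (F (fun k => z k + t * d k) - F z - t * adot v d) <= eps * (t * anorm d).
Proof.
move=> Hg eps he; case: (Hg eps he) => delta [hd Hh].
have hp := anorm_ge0 d.
exists (delta / (anorm d + 1)); split; first by apply: Rdiv_lt_0_compat; lra.
move=> t ht; rewrite -adot_scale -anorm_scale; last lra.
by apply: (Hh (fun k => t * d k)); rewrite anorm_scale; [exact: shrink_step | lra].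
Qed.

Lemma grad_unique N n (F : prof N n -> R) v w x :
  is_grad_at F v x -> is_grad_at F w x -> v = w.
Proof.
move=> Hv Hw.
have key d : pdot (psub v w) d = 0.
  apply: (small0 (c := pnorm d)); first exact: pnorm_ge0.
  move=> eps he; have he2 : 0 < eps / 2 by lra.
  case: (grad_dir d Hv he2) => T1 [hT1 H1]; case: (grad_dir d Hw he2) => T2 [hT2 H2].
  case: (pick_t hT1 hT2) => t [ht1 [ht2 _]].
  have h1 := H1 t ht1; have h2 := H2 t ht2.
  rewrite pdot_subl; apply: (abs_div_t (t := t)); first lra.
  move: h1 h2; set Fd := F (padd x (pscale t d)) => h1 h2.
  have := Rabs_triang (Fd - F x - t * pdot w d) (- (Fd - F x - t * pdot v d)).
  rewrite Rabs_Ropp; have -> : Fd - F x - t * pdot w d + - (Fd - F x - t * pdot v d) =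
    t * (pdot v d - pdot w d) by ring.
  lra.
apply: prof_ext => i k; have := pdot_self0 (key (psub v w)).
by move/(congr1 (fun z => z i k)); rewrite /psub /=; lra.
Qed.

Lemma agrad_unique n (F : ('I_n -> R) -> R) v w z :
  is_agrad_at F v z -> is_agrad_at F w z -> v = w.
Proof.
move=> Hv Hw.
have key d : adot (fun k => v k - w k) d = 0.
  apply: (small0 (c := anorm d)); first exact: anorm_ge0.
  move=> eps he; have he2 : 0 < eps / 2 by lra.
  case: (agrad_dir d Hv he2) => T1 [hT1 H1]; case: (agrad_dir d Hw he2) => T2 [hT2 H2].
  case: (pick_t hT1 hT2) => t [ht1 [ht2 _]].
  have h1 := H1 t ht1; have h2 := H2 t ht2.
  rewrite adot_subl; apply: (abs_div_t (t := t)); first lra.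
  move: h1 h2; set Fz := F (fun k => z k + t * d k) => h1 h2.
  have := Rabs_triang (Fz - F z - t * adot w d) (- (Fz - F z - t * adot v d)).
  rewrite Rabs_Ropp; have -> : Fz - F z - t * adot w d + - (Fz - F z - t * adot v d) =
    t * (adot v d - adot w d) by ring.
  lra.
apply: functional_extensionality => k; have := adot_self0 (key (fun k => v k - w k)) k; lra.
Qed.

Lemma grad_line N n (F : prof N n -> R) v x d : is_grad_at F v x ->
  (forall t, F (padd x (pscale t d)) = F x) -> pdot v d = 0.
Proof.
move=> Hv Hc; apply: (small0 (c := pnorm d)); first exact: pnorm_ge0.
move=> eps he; case: (grad_dir d Hv he) => T [hT H].
case: (pick_t hT hT) => t [ht _]; have := H t ht; rewrite Hc.
have -> : F x - F x - t * pdot v d = - (t * pdot v d) by ring.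
by rewrite Rabs_Ropp; apply: abs_div_t; lra.
Qed.

Lemma diff_dir N n (G : prof N n -> prof N n) x d : differentiable_map_at G x ->
  exists K T, 0 <= K /\ 0 < T /\ forall t, 0 < t < T -> forall i k,
    Rabs (G (padd x (pscale t d)) i k - G x i k) <= t * K.
Proof.
case=> L [[_ Lsc] H]; case: (H 1 Rlt_0_1) => delta [hd Hh].
have hp := pnorm_ge0 d; have hq := pnorm_ge0 (L d).
exists (pnorm d + pnorm (L d)), (delta / (pnorm d + 1)); split; first lra.
split; first by apply: Rdiv_lt_0_compat; lra.
move=> t ht i k.
have hlt : pnorm (pscale t d) < delta by rewrite pnorm_scale; [exact: shrink_step | lra].
have := Hh _ hlt; rewrite Lsc pnorm_scale; last lra.
set P := psub _ _ => hP; have := comp_le_pnorm P i k.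
have -> : P i k = G (padd x (pscale t d)) i k - G x i k - t * L d i k by [].
move=> b; have a := comp_le_pnorm (L d) i k.
have -> : G (padd x (pscale t d)) i k - G x i k =
  (G (padd x (pscale t d)) i k - G x i k - t * L d i k) + t * L d i k by ring.
apply: Rle_trans (Rabs_triang _ _) _.
by rewrite Rabs_mult (Rabs_pos_eq t); [nra | lra].
Qed.

Definition blk N n (i : 'I_N) (h : 'I_n -> R) : prof N n := upd (fun _ _ => 0) i h.

Lemma pdot_blk N n (v : prof N n) i h : pdot v (blk i h) = adot (v i) h.
Proof.
rewrite /pdot -(rsum_pick i (fun j => adot (v j) h)); apply: rsum_ext => j.
rewrite /blk /upd; case: (j == i) => //.
by rewrite /adot (rsum_ext (G := fun _ => 0)) ?rsum_0 // => k /=; ring.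
Qed.

Lemma pnorm_blk N n i (h : 'I_n -> R) : pnorm (blk (N := N) i h) = anorm h.
Proof. by rewrite /pnorm pdot_blk /blk /upd eqxx. Qed.

Lemma padd_blk N n (x : prof N n) i h : padd x (blk i h) = upd x i (fun k => x i k + h k).
Proof. by apply: prof_ext => j k; rewrite /padd /blk /upd; case: eqP => [->|_] //=; ring. Qed.

Lemma upd_self N n (x : prof N n) i : upd x i (x i) = x.
Proof. by apply: functional_extensionality => j; rewrite /upd; case: eqP => // ->. Qed.

Lemma psub_upd N n (x : prof N n) i z : psub (upd x i z) x = blk i (asub z (x i)).
Proof. by apply: prof_ext => j k; rewrite /psub /blk /upd /asub; case: eqP => [->|_] /=; ring. Qed.

Lemma grad_block N n (F : prof N n -> R) v x i : is_grad_at F v x ->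
  is_agrad_at (fun z => F (upd x i z)) (v i) (x i).
Proof.
move=> H eps he; case: (H eps he) => delta [hd Hh]; exists delta; split => // h hh.
by have := Hh (blk i h); rewrite pnorm_blk padd_blk pdot_blk upd_self; apply.
Qed.

Lemma agrad_plus n (F G : ('I_n -> R) -> R) v w z :
  is_agrad_at F v z -> is_agrad_at G w z ->
  is_agrad_at (fun u => F u + G u) (fun k => v k + w k) z.
Proof.
move=> Hv Hw eps he; have he2 : 0 < eps / 2 by lra.
case: (Hv _ he2) => d1 [hd1 H1]; case: (Hw _ he2) => d2 [hd2 H2].
exists (Rmin d1 d2); split; first exact: Rmin_pos.
move=> h hh; have a := H1 h (Rlt_le_trans _ _ _ hh (Rmin_l _ _)).
have b := H2 h (Rlt_le_trans _ _ _ hh (Rmin_r _ _)).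
rewrite (_ : adot _ h = adot v h + adot w h); last first.
  by rewrite /adot -rsum_add; apply: rsum_ext => k /=; ring.
move: a b; set zh := fun k => z k + h k => a b.
have := Rabs_triang (F zh - F z - adot v h) (G zh - G z - adot w h).
have -> : F zh + G zh - (F z + G z) - (adot v h + adot w h) =
  (F zh - F z - adot v h) + (G zh - G z - adot w h) by ring.
lra.
Qed.

Lemma convex_first_order n (A : ('I_n -> R) -> Prop) h v a z :
  aconvex_fun_on A h -> A a -> A z -> is_agrad_at h v a ->
  adot v (asub z a) <= h z - h a.
Proof.
move=> Hc Ha Hz Hg; set d := asub z a.
apply: (small_le (c := anorm d)); first exact: anorm_ge0.
move=> eps he; case: (agrad_dir d Hg he) => T [hT H].
case: (pick_t hT hT) => t [ht [_ ht1]].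
have := Hc z a t Hz Ha (conj (Rlt_le _ _ (proj1 ht)) ht1).
have -> : acomb t z a = (fun k => a k + t * d k).
  by apply: functional_extensionality => k; rewrite /acomb /d /asub; ring.
move=> hc; have := H t ht; rewrite -Rabs_Ropp => /(Rle_trans _ _ _ (Rle_abs _)) hl.
have : t * adot v d <= t * (h z - h a + eps * anorm d) by nra.
by move/(Rmult_le_reg_l t) => /(_ (proj1 ht)).
Qed.

Section Assumption1.
Variables (N n : nat) (Theta : Type) (Xs : 'I_N -> ('I_n -> R) -> Prop)
  (f : 'I_N -> prof N n -> R) (g : prof N n -> Theta -> R)
  (pgf : 'I_N -> prof N n -> ('I_n -> R)) (gg : prof N n -> Theta -> prof N n).
Hypothesis HA : assumption1 Xs f g pgf gg.

Lemma A1_pgrad i x : is_agrad_at (fun z => f i (upd x i z)) (pgf i x) (x i).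
Proof. by case: HA. Qed.

Lemma A1_grad th x : is_grad_at (fun u => g u th) (gg x th) x.
Proof. by case: HA => _ []. Qed.

Lemma A1_convex_set i : aconvex (Xs i).
Proof. by case: HA => _ [_ [/(_ i) [_ []]]]. Qed.

Lemma A1_convex_cost th i x : (forall j, j <> i -> Xs j (x j)) ->
  aconvex_fun_on (Xs i) (fun z => f i (upd x i z) + g (upd x i z) th).
Proof. by case: HA => _ [_ [_ [/(_ th i x) H _]]] /H []. Qed.

Lemma A1_moduli : exists chif chig : R, 0 <= chif + chig /\
  (forall u v : prof N n,
     chif * (pnorm (psub u v))^2 <= pdot (psub u v) (fun i k => pgf i u k - pgf i v k)) /\
  (forall (u v : prof N n) th,
     chig * (pnorm (psub u v))^2 <= pdot (psub u v) (psub (gg u th) (gg v th))).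
Proof. by case: HA => _ [_ [_ [_ [_ [_ H]]]]]. Qed.

(* On X, each partial gradient pgf i is a block of a differentiable map
   (Assumption 1(ii) together with uniqueness of gradients). *)
Lemma A1_pgf_diff i : exists G : prof N n -> prof N n,
  forall x, inX Xs x -> pgf i x = G x i /\ differentiable_map_at G x.
Proof.
case: HA => _ [_ [_ [_ [_ [/(_ i) [U [_ [_ [hU [G HG]]]]] _]]]]].
exists G => x hx; have [hg hd] := HG x (hU x hx); split => //.
exact: agrad_unique (A1_pgrad i x) (grad_block i hg).
Qed.

Lemma inX_comb t (x y : prof N n) : inX Xs x -> inX Xs y -> 0 <= t <= 1 ->
  inX Xs (pcomb t x y).
Proof. by move=> hx hy ht i; exact: A1_convex_set (hx i) (hy i) ht. Qed.

Lemma inX_upd (x : prof N n) i z : inX Xs x -> Xs i z -> inX Xs (upd x i z).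
Proof. by move=> hx hz j; rewrite /upd; case: eqP => [->|]. Qed.
End Assumption1.

Lemma foldr_max_props (s : seq R) a :
  a <= foldr Rmax a s /\
  (forall i, leq i.+1 (size s) -> nth 0 s i <= foldr Rmax a s) /\
  (foldr Rmax a s = a \/ exists i, leq i.+1 (size s) /\ foldr Rmax a s = nth 0 s i).
Proof.
elim: s => [|b s [IH1 [IH2 IH3]]] /=; first by split; [lra | split; [by [] | left]].
split; first exact: Rle_trans IH1 (Rmax_r _ _).
split.
  by case=> [|i] /= hi; [exact: Rmax_l | exact: Rle_trans (IH2 i hi) (Rmax_r _ _)].
case: (Rle_dec b (foldr Rmax a s)) => hb.
  rewrite Rmax_right //; case: IH3 => [->|[i [hi ->]]]; first by left.
  by right; exists i.+1.
by rewrite Rmax_left; [right; exists O | lra].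
Qed.

Lemma list_max_ge (s : seq R) i : leq i.+1 (size s) -> nth 0 s i <= list_max s.
Proof.
case: s => [|a s] //= hi; have [_ [h2 _]] := foldr_max_props s a.
by case: i hi => [|i] hi //=; [exact: (proj1 (foldr_max_props s a)) | exact: h2].
Qed.

Lemma list_max_attained (s : seq R) : s <> [::] ->
  exists i, leq i.+1 (size s) /\ list_max s = nth 0 s i.
Proof.
case: s => [|a s] // _ /=; have [_ [_ [h|[i [hi h]]]]] := foldr_max_props s a.
  by exists O.
by exists i.+1.
Qed.

Lemma sample_nth (Theta : Type) (l : seq Theta) (m : 'I_(size l)) x0 :
  sample m = nth x0 l m.
Proof. by rewrite /sample (tnth_nth x0). Qed.

Lemma list_max_ge_sample (Theta : Type) (l : seq Theta) (G : Theta -> R) (m : 'I_(size l)) :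
  G (sample m) <= list_max [seq G th | th <- l].
Proof.
have hm : leq m.+1 (size [seq G th | th <- l]) by rewrite size_map.
by have := list_max_ge hm; rewrite (nth_map (sample m)) // -sample_nth.
Qed.

Lemma list_max_attained_sample (Theta : Type) (l : seq Theta) (G : Theta -> R) :
  l <> [::] -> exists m : 'I_(size l), list_max [seq G th | th <- l] = G (sample m).
Proof.
move=> hl; have : [seq G th | th <- l] <> [::] by case: l hl.
case/list_max_attained => i [hi ->]; rewrite size_map in hi; exists (Ordinal hi).
by case: l hl hi => [//|th l'] _ hi; rewrite (nth_map th) // (sample_nth _ th).
Qed.

Lemma simplex_nonempty (Theta : Type) (l : seq Theta) (y : 'I_(size l) -> R) :
  in_simplex y -> l <> [::].
Proof. by case=> _ h e; move: y h; rewrite e => y; rewrite /rsum big_ord0; lra. Qed.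

Lemma unit_simplex K (m0 : 'I_K) : in_simplex (fun m => if m == m0 then 1 else 0).
Proof.
split; first by move=> m; case: (m == m0); lra.
exact: (rsum_pick m0 (fun _ => 1)).
Qed.

Lemma rsum_unit K (m0 : 'I_K) (F : 'I_K -> R) :
  rsum (fun m => (if m == m0 then 1 else 0) * F m) = F m0.
Proof. by rewrite -(rsum_pick m0 F); apply: rsum_ext => m; case: (m == m0); ring. Qed.

Lemma rsum_convex K (y F : 'I_K -> R) c : in_simplex y -> (forall m, F m <= c) ->
  rsum (fun m => y m * F m) <= c.
Proof.
case=> hy hs hF; apply: Rle_trans (_ : rsum (fun m => y m * c) <= _).
  by apply: rsum_le => m; have := hy m; have := hF m; nra.
by rewrite rsum_mulr hs; lra.
Qed.

Section VI.
Variables (N n : nat) (Theta : Type) (Xs : 'I_N -> ('I_n -> R) -> Prop)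
  (pgf : 'I_N -> prof N n -> ('I_n -> R)) (g : prof N n -> Theta -> R)
  (gg : prof N n -> Theta -> prof N n).

Definition vi_x (l : seq Theta) x (y : 'I_(size l) -> R) :=
  forall x', inX Xs x' -> 0 <= pdot (psub x' x) (Fx pgf gg x y).

Definition vi_y (l : seq Theta) x (y : 'I_(size l) -> R) :=
  forall w : 'I_(size l) -> R, in_simplex w ->
    rsum (fun m => w m * g x (sample m)) <= rsum (fun m => y m * g x (sample m)).

Lemma Fy_term (l : seq Theta) x (y w : 'I_(size l) -> R) :
  rsum (fun m => (w m - y m) * Fy g x m) =
  rsum (fun m => y m * g x (sample m)) - rsum (fun m => w m * g x (sample m)).
Proof. by rewrite -rsum_sub; apply: rsum_ext => m; rewrite /Fy; ring. Qed.

Lemma vi_split l x y : VI_sol Xs pgf g gg l x y <->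
  inX Xs x /\ in_simplex y /\ vi_x x y /\ vi_y x y.
Proof.
split.
- case=> hx [hy H]; split => //; split => //; split.
  + move=> x' hx'; have := H x' y hx' hy; rewrite Fy_term; lra.
  + move=> w hw; have := H x w hx hw; rewrite Fy_term pdot_subl; lra.
- case=> hx [hy [Hx Hy]]; split => //; split => // x' y' hx' hy'.
  by have := Hx x' hx'; have := Hy y' hy'; rewrite Fy_term; lra.
Qed.

Lemma Fx_block_average l x (y : 'I_(size l) -> R) i d : in_simplex y ->
  rsum (fun m => y m * adot (fun k => pgf i x k + gg x (sample m) i k) d) =
  adot (Fx pgf gg x y i) d.
Proof.
case=> _ hy1; rewrite /adot /Fx.
under rsum_ext => m do rewrite -rsum_mull.
rewrite rsum_swap; apply: rsum_ext => k.
rewrite (rsum_ext (G := fun m => (pgf i x k * d k) * y m + (y m * gg x (sample m) i k) * d k));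
  last by move=> m; ring.
by rewrite rsum_add rsum_mull rsum_mulr hy1; ring.
Qed.

Definition sqnorm K (x : prof N n) (y : 'I_K -> R) : R := pdot x x + rsum (fun m => y m * y m).

Lemma sqnorm_ge0 K (x : prof N n) (y : 'I_K -> R) : 0 <= sqnorm x y.
Proof.
have := pdot_ge0 x; have : 0 <= rsum (fun m => y m * y m) by apply: rsum_ge0 => m; nra.
rewrite /sqnorm; lra.
Qed.

Lemma znorm_le K (x x' : prof N n) (y y' : 'I_K -> R) :
  znorm x y <= znorm x' y' -> sqnorm x y <= sqnorm x' y'.
Proof.
move=> h; case: (Rle_dec (sqnorm x y) (sqnorm x' y')) => // /Rnot_le_lt hl.
by have := sqrt_lt_1_alt _ _ (conj (sqnorm_ge0 x' y') hl); rewrite /sqnorm; rewrite /znorm in h; lra.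
Qed.

(* If the midpoint of two minimum-norm solutions is again a solution, they
   coincide: the squared norm is strictly convex. *)
Lemma min_norm_midpoint l x1 y1 x2 y2 :
  min_norm_sol Xs pgf g gg l x1 y1 -> min_norm_sol Xs pgf g gg l x2 y2 ->
  VI_sol Xs pgf g gg l (pcomb (1/2) x1 x2) (fun m => 1/2 * y1 m + 1/2 * y2 m) ->
  x1 = x2.
Proof.
move=> [Hs1 Hm1] [Hs2 Hm2] Hsm.
have n1 := znorm_le (Hm1 _ _ Hsm).
have n12 := znorm_le (Hm1 _ _ Hs2); have n21 := znorm_le (Hm2 _ _ Hs1).
have ex : pdot (pcomb (1/2) x1 x2) (pcomb (1/2) x1 x2) =
    1/2 * pdot x1 x1 + 1/2 * pdot x2 x2 + (-1/4) * pdot (psub x1 x2) (psub x1 x2).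
  by apply: pdot_lin3 => i k; rewrite /pcomb /psub; field.
have ey : rsum (fun m => (1/2 * y1 m + 1/2 * y2 m) * (1/2 * y1 m + 1/2 * y2 m)) =
    1/2 * rsum (fun m => y1 m * y1 m) + 1/2 * rsum (fun m => y2 m * y2 m) +
    (-1/4) * rsum (fun m => (y1 m - y2 m) * (y1 m - y2 m)).
  by apply: rsum_lin3 => m; field.
have hyd : 0 <= rsum (fun m => (y1 m - y2 m) * (y1 m - y2 m)).
  by apply: rsum_ge0 => m; exact: Rle_0_sqr.
have hxd := pdot_ge0 (psub x1 x2).
move: n1 n12 n21; rewrite /sqnorm ex ey => n1 n12 n21.
have /pdot_self0 hz : pdot (psub x1 x2) (psub x1 x2) = 0 by lra.
by apply: prof_ext => i k; move: (congr1 (fun z => z i k) hz); rewrite /psub /=; lra.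
Qed.
End VI.

Lemma vi_NE (N n : nat) (Theta : Type) (Xs : 'I_N -> ('I_n -> R) -> Prop)
    (f : 'I_N -> prof N n -> R) (g : prof N n -> Theta -> R)
    (pgf : 'I_N -> prof N n -> ('I_n -> R)) (gg : prof N n -> Theta -> prof N n)
    (l : seq Theta) (x : prof N n) (y : 'I_(size l) -> R) :
  assumption1 Xs f g pgf gg -> VI_sol Xs pgf g gg l x y -> is_NE Xs f g l x.
Proof.
move=> HA /vi_split [hx [hy [Hvx Hvy]]]; split => // i z hz.
set d := asub z (x i); set x' := upd x i z.
have Htan (m : 'I_(size l)) : adot (fun k => pgf i x k + gg x (sample m) i k) d <=
    (f i x' + g x' (sample m)) - (f i x + g x (sample m)).
  have := convex_first_order (A1_convex_cost HA (sample m) (fun j _ => hx j)) (hx i) hz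
    (agrad_plus (A1_pgrad HA i x) (grad_block i (A1_grad HA (sample m) x))).
  by rewrite upd_self.
(* averaging with the weights y and using the x-part of the VI *)
have Havg : f i x + rsum (fun m => y m * g x (sample m)) <=
    f i x' + rsum (fun m => y m * g x' (sample m)).
  have := Hvx _ (inX_upd hx hz); rewrite psub_upd pdot_comm pdot_blk.
  rewrite -(Fx_block_average pgf gg x i d hy) => h0.
  have : rsum (fun m => y m * adot (fun k => pgf i x k + gg x (sample m) i k) d) <=
      rsum (fun m => y m * ((f i x' + g x' (sample m)) - (f i x + g x (sample m)))).
    by apply: rsum_le => m; have := Htan m; have := proj1 hy m; nra.
  rewrite [X in _ <= X](rsum_lin3 (a := f i x' - f i x) (b := 1) (c := -1)
    (B := y) (C := fun m => y m * g x' (sample m)) (D := fun m => y m * g x (sample m)));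
    last by move=> m; ring.
  by rewrite (proj2 hy); lra.
(* the y-part makes the y-average of g(x, .) its maximum over the samples *)
rewrite /cost; case: (list_max_attained_sample (g x) (simplex_nonempty hy)) => ms ->.
have h1 := Hvy _ (unit_simplex ms); rewrite rsum_unit in h1.
have h2 : rsum (fun m => y m * g x' (sample m)) <= list_max [seq g x' th | th <- l].
  by apply: rsum_convex => // m; exact: list_max_ge_sample.
lra.
Qed.

Definition pmonotone N n (P : prof N n -> prof N n) : Prop :=
  forall u v, 0 <= pdot (psub u v) (psub (P u) (P v)).

Definition hemicont N n (P : prof N n -> prof N n) (x x' : prof N n) : Prop :=
  forall eps, 0 < eps -> exists T, 0 < T /\ forall t, 0 < t < T -> t <= 1 ->
    Rabs (pdot (psub x' x) (psub (P (pcomb t x' x)) (P x))) <= eps.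

Lemma vi_minty N n (X : prof N n -> Prop) (P : prof N n -> prof N n) (c x : prof N n) :
  pmonotone P -> (forall z, X z -> 0 <= pdot (psub z x) (padd (P x) c)) ->
  forall z, X z -> 0 <= pdot (psub z x) (padd (P z) c).
Proof.
move=> Hmono Hvi z hz.
have -> : padd (P z) c = padd (padd (P x) c) (psub (P z) (P x)).
  by apply: prof_ext => i k; rewrite /padd /psub; ring.
by rewrite pdot_addr; have := Hvi z hz; have := Hmono z x; lra.
Qed.

Lemma minty_vi N n (X : prof N n -> Prop) (P : prof N n -> prof N n) (c x x' : prof N n) :
  (forall t, 0 <= t <= 1 -> X (pcomb t x' x)) ->
  (forall z, X z -> 0 <= pdot (psub z x) (padd (P z) c)) ->
  hemicont P x x' -> 0 <= pdot (psub x' x) (padd (P x) c).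
Proof.
move=> Hseg Hminty Hcont; apply: (small_le (c := 1)); first lra.
move=> eps he; case: (Hcont eps he) => T [hT HT].
case: (pick_t hT hT) => t [ht [_ ht1]].
have := Hminty _ (Hseg t (conj (Rlt_le _ _ (proj1 ht)) ht1)).
have -> : psub (pcomb t x' x) x = pscale t (psub x' x).
  by apply: prof_ext => i k; rewrite /pcomb /psub /pscale; ring.
rewrite pdot_comm pdot_scale => hm.
have {hm} : 0 <= pdot (padd (P (pcomb t x' x)) c) (psub x' x).
  by apply: (Rmult_le_reg_l t); [lra | rewrite Rmult_0_r].
have -> : padd (P (pcomb t x' x)) c = padd (padd (P x) c) (psub (P (pcomb t x' x)) (P x)).
  by apply: prof_ext => i k; rewrite /padd /psub; ring.
rewrite pdot_comm pdot_addr; have := HT t ht ht1.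
have := Rle_abs (pdot (psub x' x) (psub (P (pcomb t x' x)) (P x))); lra.
Qed.

Definition pgrad N n (pgf : 'I_N -> prof N n -> ('I_n -> R)) (x : prof N n) : prof N n :=
  fun i => pgf i x.

Lemma block_hemicont N n (G : prof N n -> prof N n) x d i : differentiable_map_at G x ->
  forall eps, 0 < eps -> exists T, 0 < T /\ forall t, 0 < t < T ->
    Rabs (adot (d i) (fun k => G (padd x (pscale t d)) i k - G x i k)) <= eps.
Proof.
move=> hdm eps he; case: (diff_dir d hdm) => K [T [hK [hT HT]]].
set D := rsum (fun k => Rabs (d i k)).
have hD : 0 <= D by apply: rsum_ge0 => k; exact: Rabs_pos.
have hq : 0 < eps / (K * D + 1) by apply: Rdiv_lt_0_compat; nra.
exists (Rmin T (eps / (K * D + 1))); split; first exact: Rmin_pos.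
move=> t ht; have := Rmin_l T (eps / (K * D + 1)); have := Rmin_r T (eps / (K * D + 1)).
move=> hte htT; apply: Rle_trans (abs_adot_le (c := t * K) _ _) _.
  by move=> k; apply: HT; lra.
have hKD : 0 <= K * D by nra.
have := shrink_step hKD he (conj (proj1 ht) (Rlt_le_trans _ _ _ (proj2 ht) hte)).
rewrite -/D; lra.
Qed.

Lemma pgrad_hemicont N n (Theta : Type) (Xs : 'I_N -> ('I_n -> R) -> Prop)
    (f : 'I_N -> prof N n -> R) (g : prof N n -> Theta -> R)
    (pgf : 'I_N -> prof N n -> ('I_n -> R)) (gg : prof N n -> Theta -> prof N n) x x' :
  assumption1 Xs f g pgf gg -> inX Xs x -> inX Xs x' -> hemicont (pgrad pgf) x x'.
Proof.
move=> HA hx hx' eps he.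
have hN : 0 <= rsum (fun _ : 'I_N => 1) by apply: rsum_ge0 => _; lra.
set e := eps / (rsum (fun _ : 'I_N => 1) + 1).
have he' : 0 < e by apply: Rdiv_lt_0_compat; lra.
have he_eps : e * (rsum (fun _ : 'I_N => 1) + 1) = eps by rewrite /e; field; lra.
clearbody e.
have hseg t : pcomb t x' x = padd x (pscale t (psub x' x)).
  by apply: prof_ext => i k; rewrite /pcomb /padd /pscale /psub; ring.
have [T [hT HT]] : exists T, 0 < T /\ forall t, 0 < t < T -> forall i, t <= 1 ->
    Rabs (adot (psub x' x i) (fun k => pgf i (pcomb t x' x) k - pgf i x k)) <= e.
  apply: fin_unif => i; case: (A1_pgf_diff HA i) => G HG.
  case: (block_hemicont (psub x' x) i (proj2 (HG x hx)) he') => T [hT HT].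
  exists T; split => // t ht ht1.
  have hxt : inX Xs (pcomb t x' x) by apply: (inX_comb HA hx' hx); lra.
  by rewrite (proj1 (HG _ hxt)) (proj1 (HG _ hx)) hseg; exact: HT.
exists T; split => // t ht ht1.
apply: Rle_trans (abs_rsum_le _) _; apply: Rle_trans (rsum_le (G := fun _ => e) _) _.
  by move=> i; exact: HT.
rewrite (rsum_ext (G := fun _ : 'I_N => e * 1)) ?rsum_mull; last by move=> _; ring.
change (e * rsum (fun _ : 'I_N => 1) <= eps); lra.
Qed.

Lemma aggr_padd N n (x h : prof N n) : aggr (padd x h) = (fun k => aggr x k + aggr h k).
Proof. by apply: functional_extensionality => k; rewrite /aggr /padd rsum_add. Qed.

Lemma aggr_pscale N n t (h : prof N n) : aggr (pscale t h) = (fun k => t * aggr h k).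
Proof. by apply: functional_extensionality => k; rewrite /aggr /pscale rsum_mull. Qed.

Lemma aggr_psub N n (x y : prof N n) : aggr (psub x y) = (fun k => aggr x k - aggr y k).
Proof. by apply: functional_extensionality => k; rewrite /aggr /psub rsum_sub. Qed.

Lemma aggr_pcomb N n t (x y : prof N n) :
  aggr (pcomb t x y) = (fun k => t * aggr x k + (1 - t) * aggr y k).
Proof. by apply: functional_extensionality => k; rewrite /aggr /pcomb rsum_add !rsum_mull. Qed.

Lemma pdot_rsum N n K (d : prof N n) (y : 'I_K -> R) (w : 'I_K -> prof N n) :
  pdot d (fun i k => rsum (fun m => y m * w m i k)) = rsum (fun m => y m * pdot d (w m)).
Proof.
rewrite /pdot /adot.
rewrite (rsum_ext (G := fun i => rsum (fun m => rsum (fun k => y m * (d i k * w m i k)))));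
  last first.
  by move=> i; rewrite rsum_swap; apply: rsum_ext => k; rewrite -rsum_mull; apply: rsum_ext => m; ring.
by rewrite rsum_swap; apply: rsum_ext => m; rewrite -rsum_mull; apply: rsum_ext => i; rewrite -rsum_mull.
Qed.

Section Aggregative.
Variables (N n : nat) (Theta : Type) (Xs : 'I_N -> ('I_n -> R) -> Prop)
  (f : 'I_N -> prof N n -> R) (g : prof N n -> Theta -> R)
  (pgf : 'I_N -> prof N n -> ('I_n -> R)) (gg : prof N n -> Theta -> prof N n)
  (gt : ('I_n -> R) -> Theta -> R).
Hypothesis HA : assumption1 Xs f g pgf gg.
Hypothesis Hgt : forall x th, g x th = gt (aggr x) th.

Lemma agg_grad_eq x x' th : aggr x = aggr x' -> gg x th = gg x' th.
Proof.
move=> e; apply: (grad_unique (A1_grad HA th x)).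
move=> eps he; case: (A1_grad HA th x' he) => delta [hd H]; exists delta; split => // h hh.
by rewrite !Hgt aggr_padd e -aggr_padd -!Hgt; exact: H.
Qed.

Lemma agg_grad_orth x d th : (forall k, aggr d k = 0) -> pdot (gg x th) d = 0.
Proof.
move=> hd; apply: (grad_line (A1_grad HA th x)) => t.
rewrite !Hgt aggr_padd aggr_pscale; congr gt.
by apply: functional_extensionality => k; rewrite hd; ring.
Qed.

(* With two distinct players, g is flat along a unit direction, so chi^g <= 0
   and hence chi^f >= 0: the pseudo-gradient is monotone. *)
Lemma agg_monotone (i0 i1 : 'I_N) (k0 : 'I_n) (th0 : Theta) :
  i0 <> i1 -> pmonotone (pgrad pgf).
Proof.
move=> hi u v; case: (A1_moduli HA) => chif [chig [hc [Hmf Hmg]]].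
(* e moves one unit of resource k0 from player i1 to player i0 *)
pose e : prof N n := fun i k =>
  if k == k0 then (if i == i0 then 1 else 0) - (if i == i1 then 1 else 0) else 0.
pose z0 : prof N n := fun _ _ => 0.
have ha k : aggr (psub e z0) k = 0.
  rewrite /aggr /psub /e /z0; case: (k == k0); last by rewrite (rsum_ext (G := fun _ => 0)) ?rsum_0 // => i; ring.
  rewrite (rsum_ext (G := fun i => (if i == i0 then 1 else 0) - (if i == i1 then 1 else 0)));
    last by move=> i; rewrite Rminus_0_r.
  by rewrite rsum_sub (rsum_pick i0 (fun _ => 1)) (rsum_pick i1 (fun _ => 1)); ring.
have h0 : pdot (psub e z0) (psub (gg e th0) (gg z0 th0)) = 0.
  by rewrite pdot_subr !(pdot_comm (psub e z0)) !agg_grad_orth //; ring.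
have hp : 1 <= pnorm (psub e z0).
  have := comp_le_pnorm (psub e z0) i0 k0; rewrite /psub /e /z0 !eqxx.
  have -> : (i0 == i1) = false by apply/eqP.
  by rewrite (_ : 1 - 0 - 0 = 1) ?Rabs_R1 //; ring.
have hchig : chig <= 0.
  have := Hmg e z0 th0; rewrite h0 /= Rmult_1_r.
  have : 1 <= pnorm (psub e z0) * pnorm (psub e z0) by nra.
  move: (pnorm (psub e z0) * pnorm (psub e z0)) => P; nra.
have := Hmf u v; have := pow2_ge_0 (pnorm (psub u v)); rewrite /pmonotone /pgrad /psub; nra.
Qed.

Variable l : seq Theta.

(* The g-part of F at any profile whose aggregate is that of x1. *)
Definition gpart (x1 : prof N n) (y : 'I_(size l) -> R) : prof N n :=
  fun i k => rsum (fun m => y m * gg x1 (sample m) i k).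

Lemma Fx_agg x x1 y : aggr x = aggr x1 -> Fx pgf gg x y = padd (pgrad pgf x) (gpart x1 y).
Proof.
move=> e; apply: prof_ext => i k; rewrite /Fx /padd /pgrad /gpart; congr (_ + _).
by apply: rsum_ext => m; rewrite (agg_grad_eq _ e).
Qed.

Lemma gpart_orth x1 x2 y : aggr x2 = aggr x1 -> pdot (psub x2 x1) (gpart x1 y) = 0.
Proof.
move=> e; rewrite /gpart pdot_rsum (rsum_ext (G := fun _ => 0)) ?rsum_0 // => m.
rewrite pdot_comm agg_grad_orth; first ring.
by move=> k; rewrite aggr_psub e; ring.
Qed.

(* The midpoint of two solutions with equal aggregates satisfies the Minty VI
   (with the common g-part): the cross term lies along a zero-aggregate
   direction and vanishes. *)
Lemma agg_midpoint_minty x1 y1 x2 y2 : pmonotone (pgrad pgf) -> aggr x2 = aggr x1 ->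
  vi_x Xs pgf gg x1 y1 -> vi_x Xs pgf gg x2 y2 ->
  forall z, inX Xs z -> 0 <= pdot (psub z (pcomb (1/2) x1 x2))
    (padd (pgrad pgf z) (gpart x1 (fun m => 1/2 * y1 m + 1/2 * y2 m))).
Proof.
move=> Hmono e21 Hv1 Hv2 z hz.
have V1 z' : inX Xs z' -> 0 <= pdot (psub z' x1) (padd (pgrad pgf x1) (gpart x1 y1)).
  by move=> hz'; rewrite -(Fx_agg y1 (erefl (aggr x1))); exact: Hv1.
have V2 z' : inX Xs z' -> 0 <= pdot (psub z' x2) (padd (pgrad pgf x2) (gpart x1 y2)).
  by move=> hz'; rewrite -(Fx_agg y2 e21); exact: Hv2.
have M1 := vi_minty Hmono V1 hz; have M2 := vi_minty Hmono V2 hz.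
rewrite (pdot_lin3 (a := 1/2) (b := 1/2) (c := -1/4)
  (B := psub z x1) (B' := padd (pgrad pgf z) (gpart x1 y1))
  (C := psub z x2) (C' := padd (pgrad pgf z) (gpart x1 y2))
  (D := psub x2 x1) (D' := psub (gpart x1 y1) (gpart x1 y2))); last first.
  move=> i k; rewrite /psub /padd /pcomb /gpart.
  rewrite (rsum_lin3 (a := 1/2) (b := 1/2) (c := 0)
    (B := fun m => y1 m * gg x1 (sample m) i k) (C := fun m => y2 m * gg x1 (sample m) i k)
    (D := fun _ => 0)); last by move=> m; ring.
  by field.
by rewrite pdot_subr !gpart_orth //; lra.
Qed.

(* The midpoint of two VI solutions with equal aggregates is a VI solution:
   its x-part follows from the Minty VI by hemicontinuity, its y-part because
   g takes the same values at all three profiles. *)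
Lemma agg_midpoint_vi x1 y1 x2 y2 : pmonotone (pgrad pgf) -> aggr x2 = aggr x1 ->
  VI_sol Xs pgf g gg l x1 y1 -> VI_sol Xs pgf g gg l x2 y2 ->
  VI_sol Xs pgf g gg l (pcomb (1/2) x1 x2) (fun m => 1/2 * y1 m + 1/2 * y2 m).
Proof.
move=> Hmono e21 /vi_split [hx1 [[hy10 hy11] [Hvx1 Hvy1]]] /vi_split [hx2 [[hy20 hy21] [Hvx2 Hvy2]]].
have hxm : inX Xs (pcomb (1/2) x1 x2) by apply: (inX_comb HA hx1 hx2); lra.
have em : aggr (pcomb (1/2) x1 x2) = aggr x1.
  by rewrite aggr_pcomb e21; apply: functional_extensionality => k; ring.
have gm : g (pcomb (1/2) x1 x2) = g x1.
  by apply: functional_extensionality => th; rewrite !Hgt em.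
have g2 : g x2 = g x1 by apply: functional_extensionality => th; rewrite !Hgt e21.
apply/vi_split; split => //; split.
  split; first by move=> m; have := hy10 m; have := hy20 m; lra.
  by rewrite rsum_add !rsum_mull hy11 hy21; field.
split.
  move=> x' hx'; rewrite (Fx_agg _ em).
  apply: (minty_vi (X := inX Xs)) (agg_midpoint_minty Hmono e21 Hvx1 Hvx2)
    (pgrad_hemicont HA hxm hx') => t ht.
  exact: (inX_comb HA hx' hxm ht).
move=> w hw; have h1 := Hvy1 w hw; have h2 := Hvy2 w hw.
rewrite gm; rewrite g2 in h2.
rewrite [X in _ <= X](rsum_lin3 (a := 1/2) (b := 1/2) (c := 0)
  (B := fun m => y1 m * g x1 (sample m)) (C := fun m => y2 m * g x1 (sample m))
  (D := fun _ => 0)); last by move=> m; ring.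
lra.
Qed.

Lemma agg_min_norm_unique x1 y1 x2 y2 : aggr x1 = aggr x2 ->
  min_norm_sol Xs pgf g gg l x1 y1 -> min_norm_sol Xs pgf g gg l x2 y2 -> x1 = x2.
Proof.
move=> e12 Hm1 Hm2.
have th0 : Theta.
  by case: (l) (simplex_nonempty (proj1 (proj2 (proj1 Hm1)))) => [|th ?] // _; exact: th.
case: (classic (exists i0 i1 : 'I_N, i0 <> i1)) => [[i0 [i1 hi]] | hone].
  apply: prof_ext => i k.
  have Hmid := agg_midpoint_vi (agg_monotone k th0 hi) (esym e12) (proj1 Hm1) (proj1 Hm2).
  by rewrite (min_norm_midpoint Hm1 Hm2 Hmid).
(* a single player: the aggregate is the profile itself *)
apply: prof_ext => i k.
have hall j : j = i by apply: NNPP => hj; apply: hone; exists j, i.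
by have := congr1 (fun a => a k) e12; rewrite /aggr !(rsum_single _ hall).
Qed.
End Aggregative.

(* The j-th sample of S is the (supp_idx j)-th sample of l; weights on S are
   extended by zero to l, and ys is restricted to S. *)
Section Support.
Variables (Theta : Type) (l : seq Theta) (ys : 'I_(size l) -> R) (d0 : 'I_(size l)).
Local Notation S := (supp_samples l ys).

Definition supp_set : seq 'I_(size l) := [seq m <- enum 'I_(size l) | Rpos_b (ys m)].

Definition supp_idx (j : 'I_(size S)) : 'I_(size l) := nth d0 supp_set j.

Definition supp_ext (w : 'I_(size S) -> R) (m : 'I_(size l)) : R :=
  rsum (fun j => if supp_idx j == m then w j else 0).

Definition supp_restr (j : 'I_(size S)) : R := ys (supp_idx j).

Lemma size_supp : size S = size supp_set.
Proof. by rewrite /supp_samples size_map. Qed.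

Lemma supp_idx_lt (j : 'I_(size S)) : leq j.+1 (size supp_set).
Proof. by rewrite -size_supp; exact: ltn_ord. Qed.

Lemma supp_sample (j : 'I_(size S)) : sample j = sample (supp_idx j).
Proof.
rewrite (sample_nth _ (sample d0)) /supp_idx; move: (supp_idx_lt j).
by move: (nat_of_ord j) => k hk; rewrite /supp_samples (nth_map d0).
Qed.

Lemma supp_idx_inj j1 j2 : supp_idx j1 = supp_idx j2 -> j1 = j2.
Proof.
rewrite /supp_idx => e; apply: val_inj => /=; apply/eqP.
rewrite -(nth_uniq d0 (supp_idx_lt j1) (supp_idx_lt j2)); first by rewrite e.
by rewrite /supp_set filter_uniq // enum_uniq.
Qed.

Lemma rsum_supp (H : 'I_(size l) -> R) : (forall m, ~~ Rpos_b (ys m) -> H m = 0) ->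
  rsum (fun j : 'I_(size S) => H (supp_idx j)) = rsum H.
Proof.
move=> hH; rewrite /rsum -(big_mkord xpredT (fun j => H (nth d0 supp_set j))) size_supp.
rewrite -(big_nth d0 xpredT H) big_filter big_mkcond /= big_enum /=.
by apply: eq_bigr => m _; case: ifP => // /negbT /hH ->.
Qed.

Lemma rsum_supp_ext w (F : 'I_(size l) -> R) :
  rsum (fun m => supp_ext w m * F m) = rsum (fun j => w j * F (supp_idx j)).
Proof.
rewrite (rsum_ext (G := fun m => rsum (fun j => if supp_idx j == m then w j * F m else 0)));
  last first.
  move=> m; rewrite /supp_ext -rsum_mulr.
  by apply: rsum_ext => j; case: (supp_idx j == m) => //; ring.
rewrite rsum_swap; apply: rsum_ext => j.
by rewrite -(rsum_pick (supp_idx j) (fun m => w j * F m)); apply: rsum_ext => m; rewrite eq_sym.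
Qed.

Lemma supp_ext_idx w j : supp_ext w (supp_idx j) = w j.
Proof.
rewrite /supp_ext -(rsum_pick j w); apply: rsum_ext => j'.
case: eqP => [/supp_idx_inj ->|ne]; first by rewrite eqxx.
by case: eqP => // e; case: ne; rewrite e.
Qed.

Lemma supp_ext_simplex w : in_simplex w -> in_simplex (supp_ext w).
Proof.
case=> h0 h1; split.
  by move=> m; apply: rsum_ge0 => j; case: (supp_idx j == m); [exact: h0 | lra].
rewrite (rsum_ext (G := fun m => supp_ext w m * 1)); last by move=> m; ring.
by rewrite rsum_supp_ext (rsum_ext (G := w)) // => j; ring.
Qed.

Lemma supp_ext_sq w : rsum (fun m => supp_ext w m * supp_ext w m) = rsum (fun j => w j * w j).
Proof. by rewrite rsum_supp_ext; apply: rsum_ext => j; rewrite supp_ext_idx. Qed.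

Hypothesis ys0 : forall m, 0 <= ys m.

Lemma rsum_supp_restr (F : 'I_(size l) -> R) :
  rsum (fun j => supp_restr j * F (supp_idx j)) = rsum (fun m => ys m * F m).
Proof.
apply: (rsum_supp (H := fun m => ys m * F m)) => m.
rewrite /Rpos_b; case: Rlt_dec => // /Rnot_lt_le h _.
by rewrite (_ : ys m = 0) ?Rmult_0_l //; have := ys0 m; lra.
Qed.

Lemma supp_restr_simplex : in_simplex ys -> in_simplex supp_restr.
Proof.
case=> _ h1; split; first by move=> j; exact: ys0.
transitivity (rsum (fun j => supp_restr j * (fun _ : 'I_(size l) => 1) (supp_idx j))).
  by apply: rsum_ext => j /=; ring.
by rewrite (rsum_supp_restr (fun _ => 1)) -[RHS]h1; apply: rsum_ext => m; ring.
Qed.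

Variables (N n : nat) (Xs : 'I_N -> ('I_n -> R) -> Prop)
  (pgf : 'I_N -> prof N n -> ('I_n -> R)) (g : prof N n -> Theta -> R)
  (gg : prof N n -> Theta -> prof N n).

Lemma Fx_supp_ext x w : Fx pgf gg (l := S) x w = Fx pgf gg (l := l) x (supp_ext w).
Proof.
apply: prof_ext => i k; rewrite /Fx rsum_supp_ext; congr (_ + _).
by apply: rsum_ext => j; rewrite supp_sample.
Qed.

Lemma Fx_supp_restr x : Fx pgf gg (l := S) x supp_restr = Fx pgf gg (l := l) x ys.
Proof.
apply: prof_ext => i k; rewrite /Fx -rsum_supp_restr; congr (_ + _).
by apply: rsum_ext => j; rewrite supp_sample.
Qed.

Lemma gsum_supp_ext x w : rsum (fun j => w j * g x (sample j)) =
  rsum (fun m => supp_ext w m * g x (sample m)).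
Proof. by rewrite rsum_supp_ext; apply: rsum_ext => j; rewrite supp_sample. Qed.

Lemma gsum_supp_restr x : rsum (fun j => supp_restr j * g x (sample j)) =
  rsum (fun m => ys m * g x (sample m)).
Proof. by rewrite -rsum_supp_restr; apply: rsum_ext => j; rewrite supp_sample. Qed.

Lemma znorm_supp_ext (x : prof N n) w : znorm x w = znorm x (supp_ext w).
Proof. by rewrite /znorm supp_ext_sq. Qed.

Lemma znorm_supp_restr (x : prof N n) : znorm x supp_restr = znorm x ys.
Proof. by rewrite /znorm -(rsum_supp_restr ys). Qed.

Lemma vi_supp_restr xs : VI_sol Xs pgf g gg l xs ys -> VI_sol Xs pgf g gg S xs supp_restr.
Proof.
case/vi_split=> hx [hy [Hvx Hvy]]; apply/vi_split; split => //.
split; first exact: supp_restr_simplex.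
split; first by move=> x' hx'; rewrite Fx_supp_restr; exact: Hvx.
by move=> w hw; rewrite gsum_supp_ext gsum_supp_restr; exact: Hvy (supp_ext_simplex hw).
Qed.

Lemma vi_supp_ext xs x' w : VI_sol Xs pgf g gg l xs ys -> VI_sol Xs pgf g gg S x' w ->
  g x' = g xs -> VI_sol Xs pgf g gg l x' (supp_ext w).
Proof.
case/vi_split=> _ [hy [_ Hvy]] /vi_split [hx' [hw [Hvx' Hvy']]] hg.
apply/vi_split; split => //; split; first exact: supp_ext_simplex.
split; first by move=> x'' hx''; rewrite -Fx_supp_ext; exact: Hvx'.
move=> w' hw'; rewrite -gsum_supp_ext hg; apply: Rle_trans (Hvy _ hw') _.
by rewrite -gsum_supp_restr -hg; exact: Hvy' _ (supp_restr_simplex hy).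
Qed.
End Support.
Arguments supp_ext {Theta l} ys d0 w m.
Arguments supp_restr {Theta l} ys d0 j.

Definition game_regular (N n : nat) (Theta : Type) (Xs : 'I_N -> ('I_n -> R) -> Prop)
    (f : 'I_N -> prof N n -> R) (g : prof N n -> Theta -> R) (S : seq Theta) : Prop :=
  (exists! x, is_NE Xs f g S x) \/
  ((exists gt : ('I_n -> R) -> Theta -> R, forall x th, g x th = gt (aggr x) th) /\
   (forall x x', is_NE Xs f g S x -> is_NE Xs f g S x' -> aggr x = aggr x')).

Section Regular.
Variables (N n : nat) (Theta : Type) (Xs : 'I_N -> ('I_n -> R) -> Prop)
  (f : 'I_N -> prof N n -> R) (g : prof N n -> Theta -> R)
  (pgf : 'I_N -> prof N n -> ('I_n -> R)) (gg : prof N n -> Theta -> prof N n).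
Hypothesis HA : assumption1 Xs f g pgf gg.

Lemma regular_same_g S x x' : game_regular Xs f g S ->
  is_NE Xs f g S x -> is_NE Xs f g S x' -> g x = g x'.
Proof.
case=> [[x0 [_ hu]] | [[gt hgt] hagg]] hx hx'; first by rewrite -(hu _ hx) -(hu _ hx').
by apply: functional_extensionality => th; rewrite !hgt (hagg _ _ hx hx').
Qed.

Lemma regular_min_norm_unique l x1 y1 x2 y2 : game_regular Xs f g l ->
  min_norm_sol Xs pgf g gg l x1 y1 -> min_norm_sol Xs pgf g gg l x2 y2 -> x1 = x2.
Proof.
move=> Hreg Hm1 Hm2; have NE1 := vi_NE HA (proj1 Hm1); have NE2 := vi_NE HA (proj1 Hm2).
case: Hreg => [[x0 [_ hu]] | [[gt hgt] hagg]]; first by rewrite -(hu _ NE1) -(hu _ NE2).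
exact: (agg_min_norm_unique HA hgt (hagg _ _ NE1 NE2) Hm1 Hm2).
Qed.

Lemma supp_min_norm l xs ys (d0 : 'I_(size l)) :
  game_regular Xs f g (supp_samples l ys) -> min_norm_sol Xs pgf g gg l xs ys ->
  min_norm_sol Xs pgf g gg (supp_samples l ys) xs (supp_restr ys d0) /\
  (forall x' w, min_norm_sol Xs pgf g gg (supp_samples l ys) x' w ->
     min_norm_sol Xs pgf g gg l x' (supp_ext ys d0 w)).
Proof.
move=> Hreg [Hs Hm]; have ys0 := proj1 (proj1 (proj2 Hs)).
have HsS := vi_supp_restr d0 ys0 Hs.
have Hext x' w : VI_sol Xs pgf g gg (supp_samples l ys) x' w ->
    VI_sol Xs pgf g gg l x' (supp_ext ys d0 w).
  move=> Hw; apply: (vi_supp_ext d0 ys0 Hs Hw).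
  exact: regular_same_g Hreg (vi_NE HA Hw) (vi_NE HA HsS).
split.
  split => // x' w Hw; rewrite (znorm_supp_restr d0 ys0) (znorm_supp_ext d0).
  exact: Hm _ _ (Hext _ _ Hw).
move=> x' w [Hw Hmw]; split; first exact: Hext.
move=> x'' y'' H''; rewrite -(znorm_supp_ext d0); apply: Rle_trans (Hmw _ _ HsS) _.
by rewrite (znorm_supp_restr d0 ys0); exact: Hm.
Qed.
End Regular.

Unset Implicit Arguments. Set Strict Implicit.
Theorem proposition4 (N n : nat) (Theta : Type)
    (Xs : 'I_N -> ('I_n -> R) -> Prop)
    (f : 'I_N -> prof N n -> R) (g : prof N n -> Theta -> R)
    (pgf : 'I_N -> prof N n -> ('I_n -> R)) (gg : prof N n -> Theta -> prof N n)
    (HA1 : assumption1 Xs f g pgf gg)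
    (Hgame : forall S : seq Theta, S <> [::] ->
       (exists! x, is_NE Xs f g S x) \/
       ((exists gt : ('I_n -> R) -> Theta -> R, forall x th, g x th = gt (aggr x) th) /\
        (forall x x', is_NE Xs f g S x -> is_NE Xs f g S x' -> aggr x = aggr x')))
    (l : seq Theta) (xs : prof N n) (ys : 'I_(size l) -> R)
    (Hmin : min_norm_sol Xs pgf g gg l xs ys) :
  Phi_is Xs pgf g gg (supp_samples l ys) xs /\ Phi_is Xs pgf g gg l xs.
Proof.
have hy := proj1 (proj2 (proj1 Hmin)).
have hl : l <> [::] := simplex_nonempty hy.
have Ul x' y' : min_norm_sol Xs pgf g gg l x' y' -> x' = xs.
  by move=> H; exact: (regular_min_norm_unique HA1 (Hgame l hl) H Hmin).
split; last by split; [exists ys | exact: Ul].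
have hsz : leq 1 (size l) by case: (l) hl.
pose d0 : 'I_(size l) := Ordinal hsz.
have hS := simplex_nonempty (supp_restr_simplex d0 (proj1 hy) hy).
have [HrS Hext] := supp_min_norm HA1 d0 (Hgame _ hS) Hmin.
split; first by exists (supp_restr ys d0).
by move=> x' w /Hext /Ul.
Qed.
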